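(* Let $s_1,s_2\in\mathcal S$ and let $s,s'\in\mathcal S$ both lie in the plane $\mathrm{Span}\{s_1,s_2\}$. Let $\vec\beta\in T_s\mathcal S$ and $\vec\beta'\in T_{s'}\mathcal S$ (each of $\eta$-norm $<1$) be the unique vectors with $B(s,\vec\beta)s_1=s_2$ and $B(s',\vec\beta')s_1=s_2$. Then $$B(s,\vec\beta)=B(s',\vec\beta')=\mathrm{id}_V+\frac{s_1\otimes s_1+s_2\otimes s_2+s_1\wedge s_2-2\gamma_{12}\,s_2\otimes s_1}{1+\gamma_{12}},$$ where $\gamma_{12}=-\eta(s_1,s_2)$. In particular all boosts linking $s_1$ to $s_2$ whose reference state lies in $\mathrm{Span}\{s_1,s_2\}$ coincide.
   Context: $V$ is a 4-dimensional real vector space with a symmetric non-degenerate bilinear form $\eta$ of signature $(-,+,+,+)$. $\mathcal S$ is one fixed connected component of $\{v\in V:\eta(v,v)=-1\}$. For $s\in\mathcal S$, $T_s\mathcal S:=\{u\in V:\eta(u,s)=0\}$. Endomorphisms are written via $(u\otimes v)(w):=\eta(v,w)u$ and $u\wedge v:=u\otimes v-v\otimes u$. For $s\in\mathcal S$ and $\vec\beta\in T_s\mathcal S$ with $\beta^2:=\eta(\vec\beta,\vec\beta)<1$, $\beta>0$, $\vec n=\vec\beta/\beta$, $\gamma=(1-\beta^2)^{-1/2}$, the boost relative to $s$ is $B(s,\vec\beta)=\mathrm{id}_V+(\gamma-1)(-s\otimes s+\vec n\otimes\vec n)+\beta\gamma(s\otimes\vec n-\vec n\otimes s)$, and $B(s,0)=\mathrm{id}_V$.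 For any $s,s_1,s_2\in\mathcal S$ there is a unique such $\vec\beta\in T_s\mathcal S$ with $B(s,\vec\beta)s_1=s_2$. *)

From HB Require Import structures.
From mathcomp Require Import all_boot all_order all_algebra.
From mathcomp Require Import reals.
Set Implicit Arguments. Unset Strict Implicit. Unset Printing Implicit Defensive.
Import Order.TTheory GRing.Theory Num.Theory.
Local Open Scope ring_scope.

(* V is modelled as 'rV[R]_4 (every 4-dim real vector space is iso to it);
   the bilinear form is etaM M u v := u M v^T for a Gram matrix M. *)
Section Defs.
Variable R : realType.
Notation V := 'rV[R]_4.

Definition etaM (M : 'M[R]_4) (u v : V) : R := (u *m M *m v^T) 0 0.

(* M symmetric, non-degenerate, of signature (-,+,+,+):
   M = P^T diag(-1,1,1,1) P with P invertible (Sylvester). *)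
Definition minkowski_gram (M : 'M[R]_4) : Prop :=
  M^T = M /\
  exists P : 'M[R]_4, P \in unitmx /\
    M = P^T *m diag_mx (\row_(i < 4) (if i == 0 then -1 else 1)) *m P.

(* The fixed connected component of the unit hyperboloid: the sheet
   containing the future unit timelike vector t0. *)
Definition inS (M : 'M[R]_4) (t0 v : V) : Prop :=
  etaM M v v = -1 /\ etaM M v t0 < 0.

Definition tens (M : 'M[R]_4) (u v : V) : V -> V := fun w => etaM M v w *: u.
Definition wedge (M : 'M[R]_4) (u v : V) : V -> V :=
  fun w => tens M u v w - tens M v u w.

Definition boost (M : 'M[R]_4) (s b : V) : V -> V :=
  if b == 0 then id else
  let beta := Num.sqrt (etaM M b b) in
  let n := beta^-1 *: b in
  let gamma := (Num.sqrt (1 - beta ^+ 2))^-1 in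
  fun w => w + (gamma - 1) *: (- tens M s s w + tens M n n w)
             + (beta * gamma) *: (tens M s n w - tens M n s w).

End Defs.

From HB Require Import structures.
From mathcomp Require Import all_boot all_order all_algebra.
From mathcomp Require Import reals.
From mathcomp Require Import ring lra.
From Stdlib Require Import FunctionalExtensionality.
Set Implicit Arguments. Unset Strict Implicit. Unset Printing Implicit Defensive.
Import Order.TTheory GRing.Theory Num.Theory.
Local Open Scope ring_scope.

(* For b <> 0, B(s, b) is the hyperbolic rotation of the plane Span{s, n}
   (n = b / |b|) fixing its orthogonal complement, and this operator does not
   depend on which orthonormal basis of the oriented plane it is written in.
   The vector s1 lies in Span{s, n}: indeed s2 - s1 = B s1 - s1 does, and
   s = a s1 + c s2 with a + c <> 0, because s1 - s2 is not timelike
   (eta(s1, s2) <= -1 on a single sheet). Rewriting the boost in the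
   orthonormal basis (s1, m) of the same plane gives s2 = gamma s1 + beta gamma m,
   hence gamma12 = gamma, and the closed formula becomes a direct computation. *)

Section BilinearForm.
Variables (R : realType) (M : 'M[R]_4).
Implicit Types u v w : 'rV[R]_4.

Lemma etaMDl u v w : etaM M (u + v) w = etaM M u w + etaM M v w.
Proof. by rewrite /etaM !mulmxDl mxE. Qed.

Lemma etaMZl a u w : etaM M (a *: u) w = a * etaM M u w.
Proof. by rewrite /etaM -!scalemxAl mxE. Qed.

Lemma etaMDr u v w : etaM M u (v + w) = etaM M u v + etaM M u w.
Proof. by rewrite /etaM linearD /= mulmxDr mxE. Qed.

Lemma etaMZr a u w : etaM M u (a *: w) = a * etaM M u w.
Proof. by rewrite /etaM linearZ /= -scalemxAr mxE. Qed.

Lemma etaMC : M^T = M -> forall u v, etaM M u v = etaM M v u.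
Proof.
move=> sym_M u v; rewrite /etaM -[in LHS](trmxK (u *m M *m v^T)) [in LHS]mxE.
by rewrite !trmx_mul trmxK sym_M mulmxA.
Qed.

End BilinearForm.

Definition minkowski_diag (R : realType) : 'M[R]_4 :=
  diag_mx (\row_(i < 4) (if i == 0 then -1 else 1)).

Lemma etaM_mulmx (R : realType) (D P : 'M[R]_4) (u v : 'rV[R]_4) :
  etaM (P^T *m D *m P) u v = etaM D (u *m P^T) (v *m P^T).
Proof. by rewrite /etaM trmx_mul trmxK !mulmxA. Qed.

Lemma etaM_minkowski_diag (R : realType) (x y : 'rV[R]_4) :
  etaM (minkowski_diag R) x y =
  - (x 0 0 * y 0 0) + x 0 1 * y 0 1 + x 0 2 * y 0 2 + x 0 3 * y 0 3.
Proof.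
rewrite /etaM mul_mx_diag mxE !big_ord_recl big_ord0 !mxE /=.
have -> : lift ord0 ord0 = 1 :> 'I_4 by apply/val_inj.
have -> : lift ord0 (lift ord0 ord0) = 2 :> 'I_4 by apply/val_inj.
have -> : lift ord0 (lift ord0 (lift ord0 ord0)) = 3 :> 'I_4 by apply/val_inj.
ring.
Qed.

Section StandardHyperboloid.
Variable R : realType.
Local Notation eta := (etaM (minkowski_diag R)).
Implicit Types x y : 'rV[R]_4.

Lemma hyperboloid_time_sqr x : eta x x = -1 -> 1 <= x 0 0 ^+ 2.
Proof. by rewrite etaM_minkowski_diag; nra. Qed.

(* Reversed Cauchy-Schwarz: with spatial parts x', y',
   (x0 y0)^2 - (1 + <x',y'>)^2 = |x' - y'|^2 + (|x'|^2 |y'|^2 - <x',y'>^2). *)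
Lemma hyperboloid_etaM_le x y :
  eta x x = -1 -> eta y y = -1 -> 0 < x 0 0 * y 0 0 -> eta x y <= -1.
Proof.
rewrite !etaM_minkowski_diag => hx hy xy_gt0.
set d := x 0 1 * y 0 1 + x 0 2 * y 0 2 + x 0 3 * y 0 3.
have lagrange : 0 <= (x 0 1 * y 0 2 - x 0 2 * y 0 1) ^+ 2
  + (x 0 1 * y 0 3 - x 0 3 * y 0 1) ^+ 2 + (x 0 2 * y 0 3 - x 0 3 * y 0 2) ^+ 2
  + (x 0 1 - y 0 1) ^+ 2 + (x 0 2 - y 0 2) ^+ 2 + (x 0 3 - y 0 3) ^+ 2.
  by rewrite !addr_ge0 ?sqr_ge0.
have sq : (1 + d) ^+ 2 <= (x 0 0 * y 0 0) ^+ 2 by rewrite /d; nra.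
have : 1 + d <= x 0 0 * y 0 0 by nra.
by rewrite /d; lra.
Qed.

Lemma hyperboloid_time_sign x y :
  eta x x = -1 -> eta y y = -1 -> eta x y < 0 -> 0 < x 0 0 * y 0 0.
Proof.
move=> hx hy xy_lt0.
have := hyperboloid_time_sqr hx; have := hyperboloid_time_sqr hy.
have [//|xy_lt0'|xy0] := ltrgt0P (x 0 0 * y 0 0); last by nra.
have hNy : eta (- y) (- y) = -1.
  by rewrite -scaleN1r etaMZl etaMZr hy; lra.
have := hyperboloid_etaM_le hx hNy.
rewrite -scaleN1r etaMZr mxE; nra.
Qed.

End StandardHyperboloid.

Lemma inS_etaM_le (R : realType) (M : 'M[R]_4) (t0 u v : 'rV[R]_4) :
  minkowski_gram M -> inS M t0 t0 -> inS M t0 u -> inS M t0 v ->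
  etaM M u v <= -1.
Proof.
case=> _ [P [_ ->]]; rewrite -/(minkowski_diag R) /inS !etaM_mulmx.
move=> [htt _] [huu hut] [hvv hvt].
have ut := hyperboloid_time_sign huu htt hut.
have vt := hyperboloid_time_sign hvv htt hvt.
apply: hyperboloid_etaM_le => //; nra.
Qed.

Section PlaneBoost.
Variables (R : realType) (M : 'M[R]_4).
Implicit Types (s n w : 'rV[R]_4) (g k x y : R).

Definition plane_boost s n g k w : 'rV[R]_4 :=
  w + (g - 1) *: (- tens M s s w + tens M n n w) + k *: wedge M s n w.

Definition boost_between (s1 s2 w : 'rV[R]_4) : 'rV[R]_4 :=
  w + (1 + - etaM M s1 s2)^-1 *:
      (tens M s1 s1 w + tens M s2 s2 w + wedge M s1 s2 w
       - (2 * - etaM M s1 s2) *: tens M s2 s1 w).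

Lemma plane_boostE s n g k w :
  plane_boost s n g k w = w + (k * etaM M n w - (g - 1) * etaM M s w) *: s
                            + ((g - 1) * etaM M n w - k * etaM M s w) *: n.
Proof. by rewrite /plane_boost /wedge /tens; apply/rowP => i; rewrite !mxE; ring. Qed.

Lemma plane_boost_base s n g k :
  etaM M s s = -1 -> etaM M n s = 0 -> plane_boost s n g k s = g *: s + k *: n.
Proof.
move=> hss hns; rewrite plane_boostE hss hns.
by apply/rowP => i; rewrite !mxE; ring.
Qed.

Lemma plane_boost_rebase_sub s n g k x y w :
  plane_boost (x *: s + y *: n) (y *: s + x *: n) g k w - w =
  (x ^+ 2 - y ^+ 2) *: (plane_boost s n g k w - w).
Proof.
rewrite !plane_boostE !etaMDl !etaMZl.
by apply/rowP => i; rewrite !mxE; ring.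
Qed.

Lemma plane_boost_rebase s n g k x y : x ^+ 2 - y ^+ 2 = 1 ->
  plane_boost (x *: s + y *: n) (y *: s + x *: n) g k = plane_boost s n g k.
Proof.
move=> hxy; apply: functional_extensionality => w.
have := plane_boost_rebase_sub s n g k x y w.
by rewrite hxy scale1r => /(congr1 (+%R^~ w)); rewrite !subrK.
Qed.

Lemma plane_boost_between s n g k :
  etaM M s s = -1 -> etaM M s n = 0 -> g ^+ 2 - k ^+ 2 = 1 -> 0 < g ->
  plane_boost s n g k = boost_between s (g *: s + k *: n).
Proof.
move=> hss hsn hgk g_gt0.
have g12 : - etaM M s (g *: s + k *: n) = g.
  by rewrite etaMDr !etaMZr hss hsn; ring.
have g1_neq0 : 1 + g != 0 by rewrite gt_eqF // ltr_wpDl.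
apply: functional_extensionality => w.
rewrite plane_boostE /boost_between g12 /wedge /tens etaMDl !etaMZl.
apply/rowP => i; rewrite !mxE; apply: subr0_eq.
(* The two sides differ by a multiple of g^2 - k^2 - 1. *)
set S := etaM M s w; set N := etaM M n w.
rewrite (_ : _ - _ = N * n 0 i * (g ^+ 2 - k ^+ 2 - 1) / (1 + g)).
  by rewrite hgk subrr mulr0 mul0r.
by field.
Qed.

Lemma boost_between_id s : etaM M s s = -1 -> boost_between s s = id.
Proof.
move=> hss; apply: functional_extensionality => w.
by rewrite /boost_between /wedge /tens hss; apply/rowP => i; rewrite !mxE; field.
Qed.

End PlaneBoost.

Lemma boost_cases (R : realType) (M : 'M[R]_4) (s b : 'rV[R]_4) :
  M^T = M -> etaM M b s = 0 -> etaM M b b < 1 ->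
  boost M s b = id \/
  exists n g k, [/\ etaM M n n = 1, etaM M s n = 0, g ^+ 2 - k ^+ 2 = 1,
                    0 < g & boost M s b = plane_boost M s n g k].
Proof.
move=> sym_M hbs hbb.
set beta := Num.sqrt (etaM M b b).
have [beta_gt0|beta_le0] := ltrP 0 beta; last first.
  (* beta = 0 forces gamma = 1: the identity, also for b <> 0 with eta(b, b) <= 0. *)
  have beta0 : beta = 0 by apply/eqP; rewrite eq_le beta_le0 sqrtr_ge0.
  left; rewrite /boost; case: eqP => // _; rewrite -/beta beta0.
  apply: functional_extensionality => w.
  by rewrite expr0n subr0 sqrtr1 invr1 subrr mul0r !scale0r !addr0.
have bb_gt0 : 0 < etaM M b b by rewrite -sqrtr_gt0.
have beta2 : beta ^+ 2 = etaM M b b by rewrite sqr_sqrtr // ltW.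
have b_neq0 : b != 0.
  by apply: contraTneq bb_gt0 => ->; rewrite -(scale0r 0) etaMZl mul0r ltxx.
have d_gt0 : 0 < 1 - beta ^+ 2 by rewrite subr_gt0 beta2.
set g := (Num.sqrt (1 - beta ^+ 2))^-1.
have g2 : g ^+ 2 = (1 - beta ^+ 2)^-1 by rewrite exprVn sqr_sqrtr // ltW.
right; exists (beta^-1 *: b), g, (beta * g); split.
- by rewrite etaMZl etaMZr -beta2; field; rewrite gt_eqF.
- by rewrite etaMZr (etaMC sym_M) hbs mulr0.
- by rewrite exprMn g2; field; rewrite gt_eqF.
- by rewrite invr_gt0 sqrtr_gt0.
- by rewrite /boost (negbTE b_neq0).
Qed.

Lemma span_exchange (F : fieldType) (V : lmodType F) (s s1 s2 n : V) (a c p q : F) :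
  a + c != 0 -> s = a *: s1 + c *: s2 -> s2 = s1 + (p *: s + q *: n) ->
  exists x y, s1 = x *: s + y *: n.
Proof.
move=> ac_neq0 hs hs2.
have e : (a + c) *: s1 = s - c *: (p *: s + q *: n).
  by rewrite {1}hs hs2 scalerDr addrA addrK scalerDl.
exists ((a + c)^-1 * (1 - c * p)), ((a + c)^-1 * - (c * q)).
apply: (scalerI ac_neq0); rewrite e [RHS]scalerDr !scalerA !mulrA mulfV // !mul1r.
by rewrite scalerBl scale1r scaleNr scalerDr !scalerA opprD addrA.
Qed.

Lemma hyperboloid_span_coefD_neq0 (R : realType) (M : 'M[R]_4) (s1 s2 s : 'rV[R]_4) (a c : R) :
  M^T = M -> etaM M s1 s1 = -1 -> etaM M s2 s2 = -1 -> etaM M s1 s2 <= -1 ->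
  etaM M s s = -1 -> s = a *: s1 + c *: s2 -> a + c != 0.
Proof.
move=> sym_M h11 h22 h12 hss def_s; apply/eqP => ac0.
move: hss; rewrite def_s !etaMDl !etaMDr !etaMZl !etaMZr (etaMC sym_M s2 s1) h11 h22.
have -> : c = - a by rewrite -[c](addKr a) ac0 addr0.
nra.
Qed.

Lemma boost_eq_boost_between (R : realType) (M : 'M[R]_4) (t0 s1 s2 s b : 'rV[R]_4) :
  minkowski_gram M -> inS M t0 t0 -> inS M t0 s1 -> inS M t0 s2 -> inS M t0 s ->
  (exists a c : R, s = a *: s1 + c *: s2) ->
  etaM M b s = 0 -> etaM M b b < 1 -> boost M s b s1 = s2 ->
  boost M s b = boost_between M s1 s2.
Proof.
move=> gram_M ht hs1 hs2 hs [a [c def_s]] hbs hbb.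
have sym_M : M^T = M by case: gram_M.
have h12 := inS_etaM_le gram_M ht hs1 hs2.
case: hs1 hs2 hs => [h11 _] [h22 _] [hss _].
have [-> /= <-|[n [g [k [hnn hsn hgk g_gt0 ->]]]] hB] := boost_cases sym_M hbs hbb.
  by rewrite boost_between_id.
have hns : etaM M n s = 0 by rewrite (etaMC sym_M).
have ac_neq0 := hyperboloid_span_coefD_neq0 sym_M h11 h22 h12 hss def_s.
have [x [y def_s1]] : exists x y, s1 = x *: s + y *: n.
  by move: hB; rewrite plane_boostE -addrA => /esym /(span_exchange ac_neq0 def_s).
have hxy : x ^+ 2 - y ^+ 2 = 1.
  by move: h11; rewrite def_s1 etaMDl !etaMDr !etaMZl !etaMZr hss hsn hns hnn; nra.
rewrite -(plane_boost_rebase M s n g k hxy) -def_s1 in hB *.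
set m := y *: s + x *: n in hB *.
have h1m : etaM M s1 m = 0.
  by rewrite /m def_s1 etaMDl !etaMDr !etaMZl !etaMZr hss hsn hns hnn; ring.
have hm1 : etaM M m s1 = 0 by rewrite (etaMC sym_M).
rewrite plane_boost_base // in hB.
by rewrite -hB; apply: plane_boost_between.
Qed.

Theorem mainTheorem4 (R : realType) (M : 'M[R]_4) (t0 : 'rV[R]_4)
  (s1 s2 s s' b b' : 'rV[R]_4) :
  minkowski_gram M -> inS M t0 t0 ->
  inS M t0 s1 -> inS M t0 s2 -> inS M t0 s -> inS M t0 s' ->
  (exists a c : R, s = a *: s1 + c *: s2) ->
  (exists a c : R, s' = a *: s1 + c *: s2) ->
  etaM M b s = 0 -> etaM M b b < 1 ->
  etaM M b' s' = 0 -> etaM M b' b' < 1 ->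
  boost M s b s1 = s2 -> boost M s' b' s1 = s2 ->
  let g12 := - etaM M s1 s2 in
  let F := fun w => w + (1 + g12)^-1 *:
      (tens M s1 s1 w + tens M s2 s2 w + wedge M s1 s2 w
       - (2 * g12) *: tens M s2 s1 w) in
  boost M s b = F /\ boost M s' b' = F.
Proof.
move=> gram_M ht hs1 hs2 hs hs' span_s span_s' hbs hbb hbs' hbb' hB hB' g12 F.
split.
- exact: (boost_eq_boost_between gram_M ht hs1 hs2 hs span_s hbs hbb hB).
- exact: (boost_eq_boost_between gram_M ht hs1 hs2 hs' span_s' hbs' hbb' hB').
Qed.
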